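(* For every $0\le k\le n$ and every $\pi\in S_n$, $$\chi_{\beta_{H_n^k}}(\pi)=|C_\pi|\,(n-|\mathrm{supp}(\pi)|)_k=(n-|\mathrm{supp}(\pi)|)_k\,\chi_{Conj}(\pi),$$ where $\chi_{Conj}$ is the character of the conjugacy representation of $S_n$.
   Context: Permutations are composed as functions, and $\pi\in S_n$ is identified with the permutation matrix whose $(i,j)$ entry is $1$ iff $i=\pi(j)$. For $A\in GL_n(\mathbb{Z}_2)$ let $\eta(A)$ (resp. $\theta(A)$) be the partition obtained by sorting the row sums (resp. column sums) of $A$, computed as integers, in weakly decreasing order. For $0\le k\le n$, $H_n^k=\{A\in GL_n(\mathbb{Z}_2)\mid \eta(A)=(n,n-1,\dots,n-k+1,1^{n-k}),\ \theta(A)=((k+1)^{n-k},k,k-1,\dots,1)\}$. $\beta_{H_n^k}$ is the complex permutation representation of $S_n$ on the space with basis $H_n^k$ given by $\pi\circ A=\pi A\pi^{-1}$, with character $\chi_{\beta_{H_n^k}}$. $C_\pi$ is the centralizer of $\pi$ in $S_n$, $\mathrm{supp}(\pi)$ is the set of points moved by $\pi$, and $(m)_k=m(m-1)\cdots(m-k+1)$ is the falling factorial ($(m)_0=1$, and $(m)_k=0$ if $0\le m<k$). The conjugacy representation is the permutation representation of $S_n$ acting on itself by conjugation. *)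

From HB Require Import structures.
From mathcomp Require Import all_boot all_order all_algebra all_fingroup algC.
Set Implicit Arguments. Unset Strict Implicit. Unset Printing Implicit Defensive.
Import GRing.Theory.
Local Open Scope ring_scope.

Notation mxF2 n := 'M['F_2]_n.

Definition pmat n (pi : 'S_n) : mxF2 n := \matrix_(i, j) (i == pi j)%:R.

Definition conj_act n (pi : 'S_n) (A : mxF2 n) : mxF2 n :=
  pmat pi *m A *m invmx (pmat pi).

(* Row and column sums computed as integers (number of nonzero entries). *)
Definition row_sums n (A : mxF2 n) : seq nat :=
  [seq (\sum_(j < n) (A i j != 0%R))%N | i <- enum 'I_n].
Definition col_sums n (A : mxF2 n) : seq nat :=
  [seq (\sum_(i < n) (A i j != 0%R))%N | j <- enum 'I_n].

Definition eta n (A : mxF2 n) : seq nat := sort geq (row_sums A).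
Definition theta n (A : mxF2 n) : seq nat := sort geq (col_sums A).

Definition eta_target n k : seq nat :=
  [seq (n - i)%N | i <- iota 0 k] ++ nseq (n - k) 1%N.
Definition theta_target n k : seq nat :=
  nseq (n - k) k.+1 ++ [seq (k - i)%N | i <- iota 0 k].

Definition H n k : {set mxF2 n} :=
  [set A : mxF2 n | [&& A \in unitmx, eta A == eta_target n k
                                    & theta A == theta_target n k]].

Definition beta_mx n k (pi : 'S_n) : 'M[algC]_#|H n k| :=
  \matrix_(a, b) (enum_val a == conj_act pi (enum_val b))%:R.
Definition chi_beta n k (pi : 'S_n) : algC := \tr (beta_mx k pi).

Definition conjrep_mx n (pi : 'S_n) : 'M[algC]_#|[set: 'S_n]| :=
  \matrix_(a, b) (enum_val a == pi * enum_val b * pi^-1)%g%:R.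
Definition chi_conj n (pi : 'S_n) : algC := \tr (conjrep_mx pi).

Definition supp n (pi : 'S_n) : {set 'I_n} := [set i | pi i != i].

From Pilot Require Import Defs.
From HB Require Import structures.
From mathcomp Require Import all_boot all_order all_algebra all_fingroup algC.
From mathcomp Require Import zify.
Set Implicit Arguments. Unset Strict Implicit. Unset Printing Implicit Defensive.
Import GRing.Theory Num.Theory.

(* A matrix A of H_n^k is pinned down by its rows and columns of distinct sums.
   The rows of sums n, n-1, ..., n-k+1 give an injection r : [k] -> [n]; after
   a column permutation s, the rows r a are the staircase [a + b < k] on the
   columns r b and all ones elsewhere, and the other rows form an identity
   block.  The staircase is forced because it is the only 0/1 matrix with row
   and column sums k, k-1, ..., 1.  Hence (s, r) |-> psi_mx s r is a bijection
   onto H_n^k, under which conjugation by pi becomes (s, r) |-> (s^pi, pi o r):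
   the fixed points are the pairs with s in C_pi and r valued in the n - |supp pi|
   fixed points of pi.  A permutation character counts fixed points. *)

Lemma leq_sum_eq (I : finType) (E1 E2 : I -> nat) :
  (forall i, E1 i <= E2 i) -> \sum_i E2 i <= \sum_i E1 i -> forall i, E1 i = E2 i.
Proof.
move=> le12 ge21 i.
have /leqif_sum[_] := fun j (_ : true) => leqif_eq (le12 j).
rewrite eqn_leq ge21 leq_sum // => /esym/forall_inP/(_ i isT)/eqP //.
Qed.

Lemma sum_ltn_ord m k : \sum_(b < k) (b < m : nat) = minn m k.
Proof.
elim: k => [|k IHk]; first by rewrite big_ord0 minn0.
by rewrite big_ord_recr /= IHk; case: ltnP; lia.
Qed.

Lemma sum_ltn_addl k a : \sum_(b < k) (a + b < k : nat) = k - a.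
Proof.
by under eq_bigr do rewrite -ltn_subRL; rewrite sum_ltn_ord; lia.
Qed.

Section RingSums.
Local Open Scope ring_scope.

Lemma sum_mul_line_weights (R : pzSemiRingType) (I J : finType)
    (y : I -> J -> R) (u : I -> R) (v : J -> R) :
  \sum_i \sum_j y i j * (u i + v j) =
    \sum_i (\sum_j y i j) * u i + \sum_j (\sum_i y i j) * v j.
Proof.
under eq_bigr do rewrite (eq_bigr _ (fun j _ => mulrDr _ _ _)) big_split /=.
rewrite big_split /= [X in _ + X]exchange_big /=.
by congr (_ + _); apply: eq_bigr => ? _; rewrite mulr_suml.
Qed.

Lemma prefix_sums_eq0 (V : zmodType) k (w : 'I_k -> V) :
  (forall m : 'I_k, \sum_(a < k | (a <= m)%N) w a = 0) -> forall a, w a = 0.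
Proof.
move=> w_prefix a; have := w_prefix a; rewrite (bigD1 a) //=.
suff -> : \sum_(b < k | (b <= a)%N && (b != a)) w b = 0 by rewrite addr0.
case: a => -[|m] lt_mk /=; first by rewrite big_pred0 // => b; rewrite -val_eqE /=; lia.
by rewrite -[RHS](w_prefix (Ordinal (ltnW lt_mk))); apply: eq_bigl => b; rewrite -val_eqE /=; lia.
Qed.

End RingSums.

Lemma staircase_unique k (x : 'I_k -> 'I_k -> bool) :
    (forall a : 'I_k, \sum_b (x a b : nat) = k - a) ->
    (forall b : 'I_k, \sum_a (x a b : nat) = k - b) ->
  forall a b, x a b = (a + b < k).
Proof.
move=> xrow xcol; pose S (a b : 'I_k) := a + b < k.
pose u (a : 'I_k) : int := (k%:Z - 2 * a%:Z)%R.
pose v (b : 'I_k) : int := (k%:Z - 1 - 2 * b%:Z)%R.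
have weight (y : 'I_k -> 'I_k -> bool) :
    (forall a : 'I_k, \sum_b (y a b : nat) = k - a) ->
    (forall b : 'I_k, \sum_a (y a b : nat) = k - b) ->
  (\sum_a \sum_b (y a b)%:R * (u a + v b) =
     \sum_(a : 'I_k) (k - a)%N%:R * u a + \sum_(b : 'I_k) (k - b)%N%:R * v b :> int)%R.
  move=> yrow ycol; rewrite sum_mul_line_weights.
  by congr (_ + _)%R; apply: eq_bigr => c _; rewrite -natr_sum ?yrow ?ycol.
have Srow a : \sum_b (S a b : nat) = k - a by exact: sum_ltn_addl.
have Scol b : \sum_a (S a b : nat) = k - b.
  by rewrite -(sum_ltn_addl k b); apply: eq_bigr => a _; rewrite /S addnC.
(* the weight u a + v b = 2k - 1 - 2(a + b) is odd, and positive exactly on S *)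
pose D (p : 'I_k * 'I_k) : int := (((S p.1 p.2)%:R - (x p.1 p.2)%:R) * (u p.1 + v p.2))%R.
have D_ge0 p : (0 <= D p)%R by rewrite /D /S /u /v; case: (x _ _); case: ltnP; lia.
have D_sum0 : (\sum_p D p = 0)%R.
  rewrite -(pair_bigA _ (fun a b => D (a, b))) /D /=.
  under eq_bigr do under eq_bigr do rewrite mulrBl.
  under eq_bigr do rewrite sumrB; rewrite sumrB weight // weight //; exact: subrr.
move=> a b; have := @psumr_eq0P _ _ predT D (fun p _ => D_ge0 p) D_sum0 (a, b) isT.
rewrite /D /S /u /v /=; case: (x a b); case: ltnP; lia.
Qed.

Lemma count_enum (T : finType) (P : pred T) : count P (enum T) = #|P|.
Proof. by rewrite enumT cardE /enum_mem size_filter; apply: eq_count. Qed.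

Lemma sum_bool_card (T : finType) (P p : pred T) :
  \sum_(i | P i) (p i : nat) = #|[set i | P i && p i]|.
Proof. by rewrite -sum1dep_card big_mkcondr /=; apply: eq_bigr => i _; case: (p i). Qed.

Lemma sum_bool_eq1 (T : finType) (P p : pred T) : \sum_(i | P i) (p i : nat) = 1 ->
  {i0 | forall i, P i && p i = (i == i0)}.
Proof. by rewrite sum_bool_card => /mem_card1[i0 E]; exists i0 => i; have := E i; rewrite !inE. Qed.

Lemma card_fiber_perm (T : finType) (f : T -> nat) s v :
  perm_eq [seq f i | i <- enum T] s -> #|[pred i | f i == v]| = count_mem v s.
Proof.
by move/seq.permP <-; rewrite count_map count_enum.
Qed.

Lemma perm_fiber1 (T : finType) (f : T -> nat) s v :
  perm_eq [seq f i | i <- enum T] s -> count_mem v s = 1 ->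
  {i0 | forall i, (f i == v) = (i == i0)}.
Proof.
move=> /card_fiber_perm-/(_ v) <- /mem_card1 [i0 Ei0]; exists i0 => i.
by have := Ei0 i; rewrite !inE.
Qed.

Lemma perm_fiber1_inj (T : finType) (f : T -> nat) s v x y :
  perm_eq [seq f i | i <- enum T] s -> count_mem v s = 1 -> f x = v -> f y = v -> x = y.
Proof.
by move=> f_s /(perm_fiber1 f_s)[i0 fE] /eqP; rewrite fE => /eqP-> /eqP; rewrite fE => /eqP.
Qed.

Lemma eta_targetE n k : k <= n ->
  eta_target n k = [seq if i < k then n - i else 1 | i <- iota 0 n].
Proof.
move=> le_kn; rewrite -[in iota _ n](subnKC le_kn) iotaD map_cat add0n.
congr (_ ++ _); first by apply/eq_in_map => i; rewrite mem_iota => /andP[_ ->].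
have /all_pred1P -> : all (pred1 1) [seq if i < k then n - i else 1 | i <- iota k (n - k)].
  by apply/allP => x /mapP[i]; rewrite mem_iota => /andP[le_ki _] ->; rewrite ltnNge le_ki.
by rewrite size_map size_iota.
Qed.

Lemma theta_targetE n k : k <= n ->
  theta_target n k = [seq if i < n - k then k.+1 else k - (i - (n - k)) | i <- iota 0 n].
Proof.
move=> le_kn; rewrite -[in iota _ n](subnK le_kn) iotaD map_cat add0n.
congr (_ ++ _); last first.
  rewrite -[n - k]addn0 iotaDl -map_comp addn0; apply: eq_map => i /=.
  by rewrite ltnNge leq_addr addKn.
have /all_pred1P -> : all (pred1 k.+1)
    [seq if i < n - k then k.+1 else k - (i - (n - k)) | i <- iota 0 (n - k)].
  by apply/allP => x /mapP[i]; rewrite mem_iota add0n => /andP[_ lt_i] ->; rewrite lt_i /=.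
by rewrite size_map size_iota.
Qed.

Lemma sorted_eta_target n k : k <= n -> sorted geq (eta_target n k).
Proof.
move=> le_kn; rewrite eta_targetE //; apply: homo_sorted (iota_sorted 0 n) => i j le_ij.
by case: (ltnP i k); case: (ltnP j k); lia.
Qed.

Lemma sorted_theta_target n k : k <= n -> sorted geq (theta_target n k).
Proof.
move=> le_kn; rewrite theta_targetE //; apply: homo_sorted (iota_sorted 0 n) => i j le_ij.
by case: (ltnP i (n - k)); case: (ltnP j (n - k)); lia.
Qed.

Lemma count_eta_target n k a : a < k -> k <= n -> count_mem (n - a) (eta_target n k) = 1.
Proof.
move=> lt_ak le_kn; rewrite count_cat count_nseq count_map.
rewrite (@eq_in_count _ _ (pred1 a)) => [|i]; last by rewrite mem_iota /=; lia.
by rewrite count_uniq_mem ?iota_uniq // mem_iota /=; case: eqP; lia.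
Qed.

Lemma count_theta_target n k b : b < k -> count_mem (k - b) (theta_target n k) = 1.
Proof.
move=> lt_bk; rewrite count_cat count_nseq count_map.
rewrite (@eq_in_count _ _ (pred1 b)) => [|i]; last by rewrite mem_iota /=; lia.
by rewrite count_uniq_mem ?iota_uniq // mem_iota /=; case: eqP; lia.
Qed.

Lemma mem_eta_target n k v :
  v \in eta_target n k -> v = 1 \/ exists2 a, a < k & v = n - a.
Proof.
rewrite mem_cat mem_nseq => /orP[/mapP[a] | /andP[_ /eqP]]; last by left.
by rewrite mem_iota => /andP[_ lt_ak] ->; right; exists a.
Qed.

Lemma mem_theta_target n k v :
  v \in theta_target n k -> v = k.+1 \/ exists2 b, b < k & v = k - b.
Proof.
rewrite mem_cat mem_nseq => /orP[/andP[_ /eqP] | /mapP[b]]; first by left.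
by rewrite mem_iota => /andP[_ lt_bk] ->; right; exists b.
Qed.

Lemma sort_geq_eq_perm (s t : seq nat) : sorted geq t -> (sort geq s == t) = perm_eq s t.
Proof.
have geq_total : total geq by move=> x y; exact: leq_total.
have geq_trans : transitive geq by move=> x y z; lia.
have geq_anti : antisymmetric geq by move=> x y; lia.
move=> sorted_t; rewrite -{1}(sorted_sort geq_trans sorted_t).
by apply/eqP/perm_sortP.
Qed.

Lemma inHE n k (A : mxF2 n) : k <= n ->
  (A \in H n k) = [&& A \in unitmx, perm_eq (row_sums A) (eta_target n k)
                    & perm_eq (col_sums A) (theta_target n k)].
Proof.
move=> le_kn; rewrite inE /Defs.eta /theta.
by rewrite !sort_geq_eq_perm ?sorted_eta_target ?sorted_theta_target.
Qed.

Lemma big_codom_split (R : Type) (idx : R) (op : Monoid.com_law idx) n k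
    (r : 'I_k -> 'I_n) (F : 'I_n -> R) : injective r ->
  \big[op/idx]_(i < n) F i =
    op (\big[op/idx]_(a < k) F (r a)) (\big[op/idx]_(i | i \notin codom r) F i).
Proof.
move=> r_inj; rewrite (bigID (mem (codom r))) /=; congr (op _ _).
rewrite -big_uniq; last by rewrite codomE map_inj_uniq // enum_uniq.
by rewrite big_image.
Qed.

Lemma card_notin_codom n k (r : 'I_k -> 'I_n) : injective r ->
  #|[set i | i \notin codom r]| = n - k.
Proof.
move=> r_inj; have := cardC (mem (codom r)); rewrite card_codom // !card_ord => E.
by rewrite -[in RHS]E addKn; apply: eq_card => i; rewrite !inE.
Qed.

Lemma F2_bool_neq0 (b : bool) : ((b%:R : 'F_2) != 0)%R = b.
Proof. by case: b; rewrite ?eqxx ?oner_neq0. Qed.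

Lemma F2_neq0E (x : 'F_2) : x = (x != 0)%:R%R.
Proof. by case: x => [[|[|m]] lt_m2] //=; apply/val_inj. Qed.

(** * The matrices [psi_mx s r] *)

Section StairMatrix.
Variables n k : nat.
Implicit Types (r : 'I_k -> 'I_n) (s : 'S_n) (A : mxF2 n).

Definition rsum A i := \sum_(j < n) (A i j != 0%R).
Definition csum A j := \sum_(i < n) (A i j != 0%R).

Lemma rsum_col_perm s A i : rsum (col_perm s A) i = rsum A i.
Proof.
rewrite /rsum (reindex_inj (@perm_inj _ s^-1)).
by apply: eq_bigr => j _; rewrite mxE permKV.
Qed.

Lemma csum_col_perm s A j : csum (col_perm s A) j = csum A (s j).
Proof. by apply: eq_bigr => i _; rewrite mxE. Qed.

Lemma row_sums_col_perm s A : row_sums (col_perm s A) = row_sums A.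
Proof. by apply: eq_map => i; exact: rsum_col_perm. Qed.

Lemma col_sums_col_perm s A : perm_eq (col_sums (col_perm s A)) (col_sums A).
Proof.
change (perm_eq (map (csum (col_perm s A)) (enum 'I_n)) (map (csum A) (enum 'I_n))).
rewrite (eq_map (csum_col_perm s A)) map_comp; apply: perm_map; rewrite perm_sym.
apply: uniq_perm => [||j]; first exact: enum_uniq.
  by rewrite (map_inj_uniq (@perm_inj _ s)) enum_uniq.
by rewrite mem_enum -[j](permKV s) map_f ?mem_enum.
Qed.

Definition pinv r i : option 'I_k := [pick a | r a == i].

Variant pinv_spec r i : option 'I_k -> Type :=
  | PinvSome a of i = r a : pinv_spec r i (Some a)
  | PinvNone of i \notin codom r : pinv_spec r i None.

Lemma pinvP r i : pinv_spec r i (pinv r i).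
Proof.
rewrite /pinv; case: pickP => [a /eqP <-|no_a]; first exact: PinvSome.
by apply: PinvNone; apply/codomP => -[a ra_i]; have := no_a a; rewrite ra_i eqxx.
Qed.

Lemma pinv_id r a : injective r -> pinv r (r a) = Some a.
Proof. by move=> r_inj; case: pinvP => [b /r_inj -> // | /negP[]]; exact: codom_f. Qed.

Lemma pinv_notin r i : i \notin codom r -> pinv r i = None.
Proof. by case: pinvP => // a ->; rewrite codom_f. Qed.

Definition stair_entry r i j :=
  match pinv r i, pinv r j with
  | Some a, Some b => a + b < k
  | Some _, None => true
  | None, _ => j == i
  end.

Definition stair_mx r : mxF2 n := \matrix_(i, j) (stair_entry r i j)%:R%R.

Definition psi_mx s r : mxF2 n := col_perm s^-1 (stair_mx r).

Section StairLineSums.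
Variables (r : 'I_k -> 'I_n) (s : 'S_n).
Hypothesis r_inj : injective r.

Lemma leq_ord_inj : k <= n.
Proof. by have := leq_card r r_inj; rewrite !card_ord. Qed.

Lemma stair_mx_id a b : stair_mx r (r a) (r b) = (a + b < k)%:R%R.
Proof. by rewrite mxE /stair_entry !pinv_id. Qed.

Lemma stair_mx_full a j : j \notin codom r -> stair_mx r (r a) j = 1%R.
Proof. by move=> j_notin; rewrite mxE /stair_entry pinv_id // pinv_notin. Qed.

Lemma stair_mx_notin i j : i \notin codom r -> stair_mx r i j = (j == i)%:R%R.
Proof. by move=> i_notin; rewrite mxE /stair_entry pinv_notin. Qed.

Lemma rsum_stair_id a : rsum (stair_mx r) (r a) = n - a.
Proof.
rewrite /rsum (big_codom_split _ _ r_inj) /=.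
under eq_bigr do rewrite stair_mx_id F2_bool_neq0; rewrite sum_ltn_addl.
under eq_bigr => j j_notin do rewrite stair_mx_full // oner_neq0.
rewrite sum1dep_card card_notin_codom //; have := leq_ord_inj; have := ltn_ord a; lia.
Qed.

Lemma rsum_stair_notin i : i \notin codom r -> rsum (stair_mx r) i = 1.
Proof.
move=> i_notin; rewrite /rsum (bigD1 i) //= stair_mx_notin // F2_bool_neq0 eqxx big1 // => j.
by rewrite stair_mx_notin // F2_bool_neq0 => /negbTE->.
Qed.

Lemma csum_stair_id b : csum (stair_mx r) (r b) = k - b.
Proof.
rewrite /csum (big_codom_split _ _ r_inj) /=.
under eq_bigr do rewrite stair_mx_id F2_bool_neq0 addnC.
rewrite sum_ltn_addl big1 ?addn0 // => i i_notin.
by rewrite stair_mx_notin // F2_bool_neq0; case: eqP i_notin => // <-; rewrite codom_f.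
Qed.

Lemma csum_stair_notin j : j \notin codom r -> csum (stair_mx r) j = k.+1.
Proof.
move=> j_notin; rewrite /csum (big_codom_split _ _ r_inj) /=.
under eq_bigr do rewrite stair_mx_full // oner_neq0; rewrite sum1_card card_ord.
rewrite (bigD1 j) //= stair_mx_notin // F2_bool_neq0 eqxx big1 ?addn0 ?addn1 //.
move=> i /andP[i_notin ne_ij].
by rewrite stair_mx_notin // F2_bool_neq0 eq_sym (negbTE ne_ij).
Qed.

Lemma perm_enum_codom_split :
  perm_eq (enum 'I_n) (map r (enum 'I_k) ++ [seq i <- enum 'I_n | i \notin codom r]).
Proof.
apply: uniq_perm => [||i]; first exact: enum_uniq.
  rewrite cat_uniq map_inj_uniq // enum_uniq filter_uniq ?enum_uniq // andbT /=.
  by apply/hasPn => i; rewrite mem_filter -codomE => /andP[].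
by rewrite mem_enum mem_cat mem_filter mem_enum -codomE andbT orbN.
Qed.

Lemma map_notin_codom (f : 'I_n -> nat) c : {in [predC codom r], f =1 fun=> c} ->
  [seq f i | i <- enum 'I_n & i \notin codom r] = nseq (n - k) c.
Proof.
move=> f_c; have /all_pred1P -> : all (pred1 c) [seq f i | i <- enum 'I_n & i \notin codom r].
  by apply/allP => x /mapP[i]; rewrite mem_filter => /andP[i_notin _] ->; rewrite /= f_c.
rewrite size_map size_filter count_enum -(card_notin_codom r_inj).
by congr nseq; apply: eq_card => i; rewrite !inE.
Qed.

Lemma perm_row_sums_stair : perm_eq (row_sums (stair_mx r)) (eta_target n k).
Proof.
change (perm_eq (map (rsum (stair_mx r)) (enum 'I_n)) (eta_target n k)).
rewrite (permPl (perm_map _ perm_enum_codom_split)) map_cat (map_notin_codom rsum_stair_notin).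
by rewrite -map_comp (eq_map rsum_stair_id) /eta_target -val_enum_ord -map_comp.
Qed.

Lemma perm_col_sums_stair : perm_eq (col_sums (stair_mx r)) (theta_target n k).
Proof.
change (perm_eq (map (csum (stair_mx r)) (enum 'I_n)) (theta_target n k)).
rewrite (permPl (perm_map _ perm_enum_codom_split)) map_cat (map_notin_codom csum_stair_notin).
by rewrite -map_comp (eq_map csum_stair_id) /theta_target -val_enum_ord -map_comp perm_catC.
Qed.

Lemma stair_mx_unit : stair_mx r \in unitmx.
Proof.
rewrite unitmxE unitfE; apply/det0P => -[v nz_v v_ker]; case/eqP: nz_v.
have col_eq j : (\sum_i v ord0 i * stair_mx r i j = 0)%R.
  by move/rowP/(_ j): v_ker; rewrite !mxE.
have v_r : forall a, v ord0 (r a) = 0%R.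
  (* column [r (k - 1 - m)] selects the rows [r a] with [a <= m] *)
  apply: prefix_sums_eq0 => m.
  have := col_eq (r (rev_ord m)); rewrite (big_codom_split _ _ r_inj) /=.
  rewrite [X in (_ + X)%R]big1 ?addr0 => [col_m|i i_notin]; last first.
    by rewrite stair_mx_notin //; case: eqP i_notin => [<-|_]; rewrite ?codom_f ?mulr0.
  rewrite -[RHS]col_m big_mkcond; apply: eq_bigr => a _.
  rewrite stair_mx_id mulr_natr mulrb /=; suff -> : (a + (k - m.+1) < k) = (a <= m) by [].
  by have := ltn_ord m; lia.
apply/rowP => j; rewrite !mxE; case: (pinvP r j) => [a ->|j_notin]; first exact: v_r.
have := col_eq j; rewrite (big_codom_split _ _ r_inj) /= big1 ?add0r => [|a _]; last first.
  by rewrite v_r mul0r.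
rewrite (bigD1 j) //= stair_mx_notin // eqxx mulr1 big1 ?addr0 // => i /andP[i_notin ne_ij].
by rewrite stair_mx_notin // eq_sym (negbTE ne_ij) mulr0.
Qed.

Lemma rsum_psi_id a : rsum (psi_mx s r) (r a) = n - a.
Proof. by rewrite rsum_col_perm rsum_stair_id. Qed.

Lemma csum_psi_id b : csum (psi_mx s r) (s (r b)) = k - b.
Proof. by rewrite csum_col_perm permK csum_stair_id. Qed.

Lemma perm_row_sums_psi : perm_eq (row_sums (psi_mx s r)) (eta_target n k).
Proof. by rewrite row_sums_col_perm perm_row_sums_stair. Qed.

Lemma perm_col_sums_psi : perm_eq (col_sums (psi_mx s r)) (theta_target n k).
Proof. by rewrite (permPl (col_sums_col_perm _ _)) perm_col_sums_stair. Qed.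

Lemma psi_mx_in_H : psi_mx s r \in H n k.
Proof.
rewrite inHE ?leq_ord_inj // perm_row_sums_psi perm_col_sums_psi andbT.
by rewrite /psi_mx col_permE unitmx_mul stair_mx_unit unitmx_perm.
Qed.

End StairLineSums.
End StairMatrix.

(** * Every matrix of [H n k] is a [psi_mx s r] *)

Section Structure.
Variables (n k : nat) (A : mxF2 n).
Hypotheses (le_kn : k <= n) (A_rows : perm_eq (row_sums A) (eta_target n k))
  (A_cols : perm_eq (col_sums A) (theta_target n k)).

Implicit Types (a b : 'I_k) (i j : 'I_n).
Local Notation nz i j := (A i j != 0%R).

Definition row_idx : {ffun 'I_k -> 'I_n} :=
  [ffun a => sval (perm_fiber1 A_rows (count_eta_target (ltn_ord a) le_kn))].
Definition col_idx : {ffun 'I_k -> 'I_n} :=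
  [ffun b => sval (perm_fiber1 A_cols (count_theta_target n (ltn_ord b)))].
Local Notation r := row_idx.
Local Notation d := col_idx.

Lemma rsum_rowE a i : (rsum A i == n - a) = (i == r a).
Proof. by rewrite ffunE; case: perm_fiber1 => /= i0 ->. Qed.

Lemma csum_colE b j : (csum A j == k - b) = (j == d b).
Proof. by rewrite ffunE; case: perm_fiber1 => /= i0 ->. Qed.

Lemma rsum_row_idx a : rsum A (r a) = n - a.
Proof. by apply/eqP; rewrite rsum_rowE. Qed.

Lemma csum_col_idx b : csum A (d b) = k - b.
Proof. by apply/eqP; rewrite csum_colE. Qed.

Lemma row_idx_inj : injective r.
Proof.
move=> a a' /(congr1 (rsum A)); rewrite !rsum_row_idx => eq_na.
by apply: ord_inj; have := ltn_ord a; have := ltn_ord a'; lia.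
Qed.

Lemma col_idx_inj : injective d.
Proof.
move=> b b' /(congr1 (csum A)); rewrite !csum_col_idx => eq_kb.
by apply: ord_inj; have := ltn_ord b; have := ltn_ord b'; lia.
Qed.

Lemma rsum_notin i : i \notin codom r -> rsum A i = 1.
Proof.
have /mem_eta_target[//|[a lt_ak /eqP]] : rsum A i \in eta_target n k.
  by rewrite -(perm_mem A_rows) map_f ?mem_enum.
by rewrite (rsum_rowE (Ordinal lt_ak)) => /eqP->; rewrite codom_f.
Qed.

Lemma csum_notin j : j \notin codom d -> csum A j = k.+1.
Proof.
have /mem_theta_target[//|[b lt_bk /eqP]] : csum A j \in theta_target n k.
  by rewrite -(perm_mem A_cols) map_f ?mem_enum.
by rewrite (csum_colE (Ordinal lt_bk)) => /eqP->; rewrite codom_f.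
Qed.

Definition lower_count j := \sum_(i | i \notin codom r) (nz i j : nat).

Lemma csum_split j : csum A j = \sum_a (nz (r a) j : nat) + lower_count j.
Proof. exact: big_codom_split row_idx_inj. Qed.

Lemma lower_countE j : lower_count j = (j \notin codom d).
Proof.
have upper_le j' : \sum_a (nz (r a) j' : nat) <= k.
  by rewrite -[leqRHS]card_ord -sum1_card; apply: leq_sum => a _; case: (nz _ _).
symmetry; move: j; apply: leq_sum_eq => [j|].
  case: (boolP (j \in codom d)) => //= j_notin.
  by have := csum_split j; rewrite csum_notin // => /esym; have := upper_le j; lia.
(* the [n - k] rows outside [codom r] carry one nonzero entry each *)
have -> : \sum_j lower_count j = n - k.
  rewrite /lower_count exchange_big /= -(card_notin_codom row_idx_inj) -sum1dep_card.
  by apply: eq_bigr => i i_notin; exact: rsum_notin.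
rewrite (sum_bool_card predT) -(card_notin_codom col_idx_inj).
by apply/eq_leq/eq_card => i; rewrite !inE.
Qed.

Lemma row_idx_full a j : j \notin codom d -> nz (r a) j.
Proof.
move=> j_notin; suff /(_ a) : forall a, (nz (r a) j : nat) = 1 by case: (nz _ _).
apply: leq_sum_eq => [a'|]; first by case: (nz _ _).
have := csum_split j; rewrite csum_notin // lower_countE j_notin sum1_card card_ord; lia.
Qed.

Lemma notin_col_idx i b : i \notin codom r -> nz i (d b) = false.
Proof.
move=> i_notin; have /eqP := lower_countE (d b); rewrite codom_f /= sum_nat_eq0.
by move/forall_inP/(_ i i_notin); case: (nz _ _).
Qed.

Definition col_of i := odflt i [pick j | nz i j].

Lemma nz_notin i j : i \notin codom r -> nz i j = (j == col_of i).
Proof.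
move=> /rsum_notin/(sum_bool_eq1 (P := predT))[j0 nzE].
have {}nzE j' : nz i j' = (j' == j0) by rewrite -nzE.
by rewrite nzE /col_of; case: pickP => [j1|/(_ j0)]; rewrite nzE ?eqxx // => /eqP->.
Qed.

Lemma col_of_notin i : i \notin codom r -> col_of i \notin codom d.
Proof.
move=> i_notin; apply/codomP => -[b col_ib].
by have := notin_col_idx b i_notin; rewrite nz_notin // col_ib eqxx.
Qed.

Lemma col_of_inj : {in [predC codom r] &, injective col_of}.
Proof.
move=> i i'; rewrite !inE => i_notin i'_notin col_ii'.
have := lower_countE (col_of i); rewrite col_of_notin // => /sum_bool_eq1[i0 nzE].
have nz_col j : j \notin codom r -> nz j (col_of j) by move=> j_notin; rewrite nz_notin.
move: (nzE i) (nzE i'); rewrite i_notin i'_notin nz_col // col_ii' nz_col //.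
by move=> /esym/eqP-> /esym/eqP->.
Qed.

Lemma block_staircase a b : nz (r a) (d b) = (a + b < k).
Proof.
apply: (staircase_unique (x := fun a b => nz (r a) (d b))) => {a b} [a|b].
  have := rsum_row_idx a; rewrite /rsum (big_codom_split _ _ col_idx_inj) /=.
  under [X in _ + X = _]eq_bigr => j j_notin do rewrite row_idx_full //.
  by rewrite sum1dep_card (card_notin_codom col_idx_inj); have := ltn_ord a; lia.
by have := csum_split (d b); rewrite csum_col_idx lower_countE codom_f addn0.
Qed.

Definition sigma_fun i := if pinv r i is Some a then d a else col_of i.

Lemma sigma_fun_inj : injective sigma_fun.
Proof.
move=> i i'; rewrite /sigma_fun.
case: (pinvP r i) => [a ->|i_notin]; case: (pinvP r i') => [a' ->|i'_notin].
- by move/col_idx_inj->.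
- by move=> da; have := col_of_notin i'_notin; rewrite -da codom_f.
- by move=> da; have := col_of_notin i_notin; rewrite da codom_f.
by apply: col_of_inj; rewrite inE.
Qed.

Definition sigma := perm sigma_fun_inj.

Lemma sigma_stair i j : A i (sigma j) = stair_mx r i j.
Proof.
rewrite permE [LHS]F2_neq0E.
case: (pinvP r i) => [a ->|i_notin]; last first.
  have sigma_i : col_of i = sigma_fun i by rewrite /sigma_fun pinv_notin.
  by rewrite stair_mx_notin // nz_notin // sigma_i (inj_eq sigma_fun_inj).
case: (pinvP r j) => [b ->|j_notin]; rewrite /sigma_fun ?(pinv_id _ row_idx_inj) ?pinv_notin //.
  by rewrite block_staircase (stair_mx_id row_idx_inj).
by rewrite row_idx_full ?col_of_notin // (stair_mx_full row_idx_inj).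
Qed.

Lemma psi_mx_sigma : A = psi_mx sigma r.
Proof. by apply/matrixP => i j; rewrite mxE -sigma_stair permKV. Qed.

End Structure.

(** * Fixed points of conjugation *)

Lemma conj_actE n (pi : 'S_n) (A : mxF2 n) i j :
  conj_act pi A i j = A (pi^-1%g i) (pi^-1%g j).
Proof.
have pmatE : pmat pi = perm_mx pi^-1%g.
  by apply/matrixP => i' j'; rewrite !mxE (canF_eq (permKV pi)).
have invmxE : invmx (perm_mx pi^-1%g) = perm_mx pi :> mxF2 n.
  rewrite -[LHS]mulmx1 -perm_mx1 -(mulVg pi) perm_mxM mulmxA mulVmx ?unitmx_perm //.
  exact: mul1mx.
rewrite /conj_act pmatE invmxE -[in perm_mx pi](invgK pi) -col_permE -row_permE.
by rewrite !mxE.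
Qed.

Section Conjugation.
Variables (n k : nat) (pi : 'S_n).
Implicit Types (s : 'S_n) (r : 'I_k -> 'I_n).

Lemma psi_mxE s r i j : psi_mx s r i j = stair_mx r i (s^-1%g j).
Proof. by rewrite mxE. Qed.

Lemma pinv_conj r i : pinv [ffun a => pi (r a)] i = pinv r (pi^-1%g i).
Proof. by apply: eq_pick => a; rewrite ffunE /= (canF_eq (permK pi)). Qed.

Lemma stair_mx_conj r i j :
  stair_mx [ffun a => pi (r a)] i j = stair_mx r (pi^-1%g i) (pi^-1%g j).
Proof. by rewrite !mxE /stair_entry !pinv_conj (inj_eq (@perm_inj _ pi^-1%g)). Qed.

Lemma psi_mx_conj s r : conj_act pi (psi_mx s r) = psi_mx (s ^ pi)%g [ffun a => pi (r a)].
Proof.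
apply/matrixP => i j; rewrite conj_actE !psi_mxE stair_mx_conj -conjVg conjgE !permM.
by rewrite permK.
Qed.

End Conjugation.

Lemma psi_mx_inj n k s s' (r r' : 'I_k -> 'I_n) : injective r -> injective r' ->
  psi_mx s r = psi_mx s' r' -> s = s' /\ r =1 r'.
Proof.
move=> r_inj r'_inj eq_psi; have le_kn := leq_ord_inj r_inj.
have r_eq a : r a = r' a.
  have count1 := count_eta_target (ltn_ord a) le_kn.
  apply: (perm_fiber1_inj (perm_row_sums_psi s r_inj) count1); first exact: rsum_psi_id.
  by rewrite eq_psi; exact: rsum_psi_id.
split=> //; apply/permP => i; case: (pinvP r i) => [a ->|i_notin].
  have count1 := count_theta_target n (ltn_ord a).
  apply: (perm_fiber1_inj (perm_col_sums_psi s r_inj) count1); first exact: csum_psi_id.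
  by rewrite eq_psi r_eq; exact: csum_psi_id.
have i_notin' : i \notin codom r' by rewrite -(eq_codom r_eq).
have := congr1 (fun A : mxF2 n => A i (s i)) eq_psi.
rewrite /= !psi_mxE permK !stair_mx_notin // eqxx.
case: eqP => [/(congr1 s')|_ /eqP]; first by rewrite permKV.
by rewrite oner_eq0.
Qed.

Lemma H_psi_mx n k (A : mxF2 n) : k <= n -> A \in H n k ->
  exists2 p : 'S_n * {ffun 'I_k -> 'I_n}, injective p.2 & A = psi_mx p.1 p.2.
Proof.
move=> le_kn; rewrite inHE // => /and3P[_ rows cols].
by exists (sigma le_kn rows cols, row_idx le_kn rows); [exact: row_idx_inj | exact: psi_mx_sigma].
Qed.

Lemma conjg_fix_cent1 (gT : finGroupType) (x y : gT) : (x ^ y == x)%g = (x \in 'C[y])%g.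
Proof. by rewrite conjg_fix; apply/commgP/cent1P. Qed.

Section FixedPoints.
Variables (n k : nat) (pi : 'S_n).
Hypothesis le_kn : k <= n.

Lemma psi_mx_fixed s (r : {ffun 'I_k -> 'I_n}) : injective r ->
  (conj_act pi (psi_mx s r) == psi_mx s r) = (s \in 'C[pi])%g && [forall a, pi (r a) == r a].
Proof.
move=> r_inj; have pi_r_inj : injective [ffun a => pi (r a)].
  by move=> a a'; rewrite !ffunE => /perm_inj/r_inj.
rewrite psi_mx_conj -conjg_fix_cent1; apply/eqP/andP => [/psi_mx_inj[] // -> pi_r|[/eqP-> fix_r]].
  by split=> //; apply/forallP => a; rewrite -[X in _ == X]pi_r ffunE.
suff -> : [ffun a => pi (r a)] = r by [].
by apply/ffunP => a; rewrite ffunE; apply/eqP/(forallP fix_r).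
Qed.

Definition fixed_pairs :=
  setX 'C[pi]%g [set r : {ffun 'I_k -> 'I_n} in ffun_on [pred i | pi i == i] | injectiveb r].

Lemma fixed_H_psi :
  [set A in H n k | conj_act pi A == A] =
    [set psi_mx p.1 p.2 | p : 'S_n * {ffun 'I_k -> 'I_n} in fixed_pairs].
Proof.
apply/setP => A; rewrite inE; apply/andP/imsetP => [[/(H_psi_mx le_kn)[[s r] /= r_inj ->]]|].
  rewrite psi_mx_fixed // => /andP[cent_s fix_r]; exists (s, r) => //.
  rewrite inE /= cent_s !inE (introT (injectiveP _) r_inj) andbT.
  by apply/forallP => a; rewrite inE; apply: (forallP fix_r).
move=> [[s r] /setXP[/= cent_s]]; rewrite inE => /andP[/ffun_onP fix_r /injectiveP r_inj] ->.
split; first exact: psi_mx_in_H.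
by rewrite psi_mx_fixed // cent_s; apply/forallP => a; have := fix_r a; rewrite inE.
Qed.

Lemma card_fixed_H :
  #|[set A in H n k | conj_act pi A == A]| = #|'C[pi]%g| * #|[pred i | pi i == i]| ^_ k.
Proof.
rewrite fixed_H_psi card_in_imset ?cardsX ?card_inj_ffuns_on ?card_ord //.
move=> [s r] [s' r']; rewrite !inE /= => /and3P[_ _ /injectiveP r_inj].
move=> /and3P[_ _ /injectiveP r'_inj] /psi_mx_inj[] // -> eq_r.
by congr pair; apply/ffunP.
Qed.

End FixedPoints.

Section ActionTrace.
Local Open Scope ring_scope.

Lemma mxtrace_action_mx (R : pzSemiRingType) (T : finType) (X : {set T}) (f : T -> T) :
  \tr (\matrix_(a, b) (enum_val a == f (enum_val b))%:R : 'M[R]_#|X|) =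
    #|[set x in X | f x == x]|%:R.
Proof.
rewrite /mxtrace; under eq_bigr do rewrite mxE.
rewrite -(big_enum_val (fun x => (x == f x)%:R)) /= -natr_sum sum_bool_card.
by congr _%:R; apply: eq_card => x; rewrite !inE eq_sym.
Qed.

End ActionTrace.

Lemma card_fixpoints_supp n (pi : 'S_n) : #|[pred i | pi i == i]| = n - #|supp pi|.
Proof.
have -> : #|supp pi| = #|[predC [pred i | pi i == i]]| by apply: eq_card => i; rewrite !inE.
by have := cardC [pred i | pi i == i]; rewrite card_ord => /(canRL (addnK _)).
Qed.

Section Characters.
Local Open Scope ring_scope.

Lemma chi_betaE n k (pi : 'S_n) : (k <= n)%N ->
  chi_beta k pi = (#|'C[pi]%g| * (n - #|supp pi|) ^_ k)%:R.
Proof.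
by move=> le_kn; rewrite /chi_beta /beta_mx mxtrace_action_mx card_fixed_H // card_fixpoints_supp.
Qed.

Lemma chi_conjE n (pi : 'S_n) : chi_conj pi = #|'C[pi]%g|%:R.
Proof.
rewrite /chi_conj /conjrep_mx (mxtrace_action_mx _ _ (fun x => pi * x * pi^-1)%g).
congr _%:R; apply: eq_card => s.
by rewrite [in LHS]inE in_setT -(inj_eq (mulIg pi)) mulgKV cent1E eq_sym.
Qed.

End Characters.

Unset Implicit Arguments.
Local Open Scope ring_scope.

Theorem mainTheorem5 (n k : nat) (pi : 'S_n) : (k <= n)%N ->
  chi_beta k pi = (#|'C[pi]%g| * (n - #|supp pi|) ^_ k)%N%:R /\
  chi_beta k pi = ((n - #|supp pi|) ^_ k)%:R * chi_conj pi.
Proof. by move=> le_kn; rewrite chi_betaE // chi_conjE -natrM mulnC. Qed.
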